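(* Let $m\ge2$, $G=CK(2m-1)$, and let $B$ be a blocker for the simple Hamiltonian paths of $G$ whose $m$ edges are parallel (or equal) to the boundary edges $[0,1],[1,2],\dots,[m-1,m]$, one edge per direction. Let $[\alpha,\alpha+1]$ and $[m-\delta-1,m-\delta]$ be, respectively, the first and the last edges of the path $\langle 0,1,\dots,m\rangle$ that belong to $B$ (so $0\le\alpha<\alpha+1\le m-\delta-1<m-\delta\le m$). Then $B$ misses at most one edge of the boundary path $\langle\alpha,\alpha+1,\dots,m-\delta\rangle$.
   Context: $CK(2m-1)$ is the complete convex geometric graph on $2m-1$ points in convex position, labelled clockwise $0,\dots,2m-2$ (elements of $\mathbb{Z}_{2m-1}$), with all segments as edges; boundary edges are $[i,i+1]$. The direction of $[i,j]$ is $i+j\pmod{2m-1}$ and edges are parallel if they have the same direction. A simple Hamiltonian path (SHP) is a path through all vertices whose edges pairwise do not cross; a blocker for SHPs is an edge set of smallest possible size meeting (sharing an edge with) every SHP. (Every blocker has size $m$ and contains at least two boundary edges.) *)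

From mathcomp Require Import all_boot.
Set Implicit Arguments. Unset Strict Implicit. Unset Printing Implicit Defensive.

(* Number of points of CK(2m-1). Vertices are 'I_(npts m) = {0,...,2m-2}, in
   clockwise order; an edge is a 2-element subset of vertices. *)
Definition npts (m : nat) : nat := (2 * m).-1.

Section CK.
Variable n : nat.

Definition is_edge (e : {set 'I_n}) : bool := #|e| == 2.

(* Two segments between points in convex position cross iff they have four
   distinct endpoints which alternate along the circle. *)
Definition cross1 (e f : {set 'I_n}) : bool :=
  [exists a : 'I_n, [exists b : 'I_n, [exists c : 'I_n, [exists d : 'I_n,
     [&& e == [set a; b], f == [set c; d], a < c, c < b & b < d]]]]].

Definition cross (e f : {set 'I_n}) : bool := cross1 e f || cross1 f e.

Definition path_edges (p : seq 'I_n) : seq {set 'I_n} :=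
  [seq [set xy.1; xy.2] | xy <- zip p (behead p)].

Definition is_SHP (p : seq 'I_n) : bool :=
  [&& uniq p, size p == n &
      all (fun e => all (fun f => ~~ cross e f) (path_edges p)) (path_edges p)].

Definition meets_all_SHP (B : {set {set 'I_n}}) : Prop :=
  forall p : seq 'I_n, is_SHP p -> has (fun e => e \in B) (path_edges p).

Definition is_blocker (B : {set {set 'I_n}}) : Prop :=
  [/\ forall e, e \in B -> is_edge e,
      meets_all_SHP B &
      forall B' : {set {set 'I_n}}, (forall e, e \in B' -> is_edge e) ->
        meets_all_SHP B' -> #|B| <= #|B'|].

Definition direction (e : {set 'I_n}) : nat := (\sum_(x in e) (x : nat)) %% n.

Definition bd (i : nat) : {set 'I_n} :=
  [set x : 'I_n | (x == i %% n :> nat) || (x == i.+1 %% n :> nat)].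

End CK.

From mathcomp Require Import all_boot zify.
Set Implicit Arguments. Unset Strict Implicit. Unset Printing Implicit Defensive.

(* Suppose [a, a+1] and [b, b+1] are both missing from B, with
   alpha < a < b < beta := m - delta - 1; we build a simple Hamiltonian path
   avoiding B.  Unroll the circle to the integers: a path that grows an
   interval of consecutive integers one endpoint at a time never crosses
   itself.  Ours starts at beta + 1 and fills the window alpha + 1, ...,
   alpha + n.  It alternates runs to the right, along boundary edges beyond
   beta (none of which is in B), with a jump from the right end R to the left
   end x, a walk down [b, b+1] or [a, a+1] when these come next, and a jump
   back to the right.
   Call an edge of B outer if it is parallel to some [i, i+1] with i < alpha
   or i > beta: there are at most alpha + (m - 1 - beta) of them, and each has
   at most one endpoint in (alpha, beta].  As x + R stays in a narrow band, the
   jumps have directions between those of [beta, beta+1] and [alpha, alpha+1]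
   (through 0), where B has no edge but these two; so a jump lying in B is
   outer and ends at the current left point.  Choosing the run length among
   2c + 1 values, c the number of outer edges at the left points of the two
   jumps, lets both jumps avoid B, and charging the run to these edges keeps
   the right end below alpha + n.  The count closes exactly because the two
   missing edges let the left end advance twice for free. *)

Definition cross_nat (e f : nat * nat) : bool :=
  let a := minn e.1 e.2 in let b := maxn e.1 e.2 in
  let c := minn f.1 f.2 in let d := maxn f.1 f.2 in
  ((a < c) && (c < b) && (b < d)) || ((c < a) && (a < d) && (d < b)).

Lemma cross_nat_sym e f : cross_nat e f = cross_nat f e.
Proof. rewrite /cross_nat; lia. Qed.

Lemma cross_nat_irr e : ~~ cross_nat e e.
Proof. rewrite /cross_nat; lia. Qed.

Lemma cross_nat_swapl u w f : cross_nat (u, w) f = cross_nat (w, u) f.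
Proof. rewrite /cross_nat /=; lia. Qed.

Lemma cross_nat_swapr u w e : cross_nat e (u, w) = cross_nat e (w, u).
Proof. rewrite /cross_nat /=; lia. Qed.

Lemma cross_nat_extend l r u1 w1 u w :
  l <= u1 <= r -> l <= w1 <= r -> (u = l \/ u = r) ->
  ((0 < l /\ w = l.-1) \/ w = r.+1) ->
  ~~ cross_nat (u1, w1) (u, w) && ~~ cross_nat (u, w) (u1, w1).
Proof. rewrite /cross_nat /=; lia. Qed.

Lemma set2_inj (T : finType) (x y a b : T) :
  [set x; y] = [set a; b] -> a != b -> (x = a /\ y = b) \/ (x = b /\ y = a).
Proof.
move=> E nab.
have ha : a \in [set x; y] by rewrite E !inE eqxx.
have hb : b \in [set x; y] by rewrite E !inE eqxx orbT.
have hx : x \in [set a; b] by rewrite -E !inE eqxx.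
have hy : y \in [set a; b] by rewrite -E !inE eqxx orbT.
move: ha hb hx hy; rewrite !inE.
case/orP=> /eqP ha; case/orP=> /eqP hb; case/orP=> /eqP hx; case/orP=> /eqP hy; subst;
  try by [left|right]; by rewrite eqxx in nab.
Qed.

Lemma set2_cancelr (T : finType) (p q1 q2 : T) :
  [set q1; p] = [set q2; p] -> q1 != p -> q1 = q2.
Proof.
move=> e hne; have : q1 \in [set q2; p] by rewrite -e !inE eqxx.
by rewrite !inE (negbTE hne) orbF => /eqP.
Qed.

Lemma modn_lt_double n u : u < n.*2 ->
  (u %% n = u /\ u < n) \/ (u %% n = u - n /\ n <= u).
Proof.
move=> h; case: (ltnP u n) => hu; first by left; rewrite modn_small.
right; split=> //.
have -> : u = 1 * n + (u - n) by rewrite mul1n subnKC.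
by rewrite modnMDl modn_small; [rewrite mul1n addKn | lia].
Qed.

Lemma card2_set2 (T : finType) (E : {set T}) p q :
  #|E| = 2 -> p \in E -> q \in E -> p != q -> E = [set p; q].
Proof.
move=> hE hp hq hpq; apply/eqP; rewrite eq_sym eqEcard hE cards2 hpq andbT.
by apply/subsetP=> x; rewrite !inE => /orP[/eqP->|/eqP->].
Qed.

Section OrdMod.
Variable n : nat.
Hypothesis hn : 0 < n.

Definition ord_mod (v : nat) : 'I_n := Ordinal (ltn_pmod v hn).

Lemma ord_mod_ord (x : 'I_n) : ord_mod x = x.
Proof. by apply: val_inj; rewrite /= modn_small. Qed.

Lemma ord_mod_inj x y : ord_mod x = ord_mod y -> x <= y < x + n -> x = y.
Proof.
move=> /(congr1 val) /= /eqP exy /andP[hxy hyx].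
move: exy; rewrite -(subnKC hxy) -{1}[x]addn0 eqn_modDl mod0n modn_small; last by lia.
by move/eqP; lia.
Qed.

Lemma ord_mod_inj_window c x y :
  c <= x < c + n -> c <= y < c + n -> ord_mod x = ord_mod y -> x = y.
Proof.
move=> hx hy; case: (leqP x y) => hxy exy; first by apply: ord_mod_inj => //; lia.
by apply/esym/ord_mod_inj => //; lia.
Qed.

Lemma ord_mod_window_neq c u v :
  c <= u < c + n -> c <= v < c + n -> u != v -> ord_mod u != ord_mod v.
Proof. by move=> hu hv; apply: contra => /eqP /(ord_mod_inj_window hu hv) ->. Qed.

Lemma ord_mod_addn_inj R u v :
  u < n -> v < n -> ord_mod (R + u) = ord_mod (R + v) -> u = v.
Proof.
move=> hu hv e; case: (leqP u v) => huv.
  by apply/(@addnI R)/ord_mod_inj => //; lia.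
by apply/esym/(@addnI R)/ord_mod_inj => //; lia.
Qed.

Lemma bd_ord_mod u : bd n u = [set ord_mod u; ord_mod u.+1].
Proof. by apply/setP=> x; rewrite !inE -!val_eqE. Qed.

Lemma bd_addn u : bd n (u + n) = bd n u.
Proof. by apply/setP=> x; rewrite !inE -addSn !modnDr. Qed.

Lemma direction_set2 u w :
  u %% n != w %% n -> direction [set ord_mod u; ord_mod w] = (u + w) %% n.
Proof.
move=> h; rewrite /direction.
have hne : ord_mod u \notin [set ord_mod w] by rewrite inE -val_eqE.
by rewrite [[set _; _]]/(setU _ _) big_setU1 //= big_set1 modnDm.
Qed.

Lemma cross_nat_ord_mod c u1 w1 u2 w2 :
  c <= u1 < c + n -> c <= w1 < c + n -> c <= u2 < c + n -> c <= w2 < c + n ->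
  c <= n -> ord_mod u1 < ord_mod u2 -> ord_mod u2 < ord_mod w1 ->
  ord_mod w1 < ord_mod w2 -> cross_nat (u1, w1) (u2, w2).
Proof.
move=> h1 h2 h3 h4 hc /=.
have m1 : u1 < n.*2 by lia.
have m2 : w1 < n.*2 by lia.
have m3 : u2 < n.*2 by lia.
have m4 : w2 < n.*2 by lia.
case: (modn_lt_double m1) => [[-> ?]|[-> ?]];
case: (modn_lt_double m2) => [[-> ?]|[-> ?]];
case: (modn_lt_double m3) => [[-> ?]|[-> ?]];
case: (modn_lt_double m4) => [[-> ?]|[-> ?]]; rewrite /cross_nat /=; lia.
Qed.

Lemma cross1_ord_mod c u1 w1 u2 w2 :
  c <= u1 < c + n -> c <= w1 < c + n -> c <= u2 < c + n -> c <= w2 < c + n ->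
  c <= n -> ~~ cross_nat (u1, w1) (u2, w2) ->
  ~~ cross1 [set ord_mod u1; ord_mod w1] [set ord_mod u2; ord_mod w2].
Proof.
move=> h1 h2 h3 h4 hc hl.
apply/negP=> /existsP[a /existsP[b /existsP[c' /existsP[d /and5P[E1 E2 ac cb bd]]]]].
have nab : a != b by rewrite neq_ltn (ltn_trans ac cb).
have ncd : c' != d by rewrite neq_ltn (ltn_trans cb bd).
have := set2_inj (eqP E1) nab; have := set2_inj (eqP E2) ncd.
move=> [[e1 e2]|[e1 e2]] [[e3 e4]|[e3 e4]]; subst; move/negP: hl; apply.
- exact: (cross_nat_ord_mod (c := c)).
- by rewrite cross_nat_swapl; apply: (cross_nat_ord_mod (c := c)).
- by rewrite cross_nat_swapr; apply: (cross_nat_ord_mod (c := c)).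
- by rewrite cross_nat_swapr cross_nat_swapl; apply: (cross_nat_ord_mod (c := c)).
Qed.

Lemma cross_ord_mod c u1 w1 u2 w2 :
  c <= u1 < c + n -> c <= w1 < c + n -> c <= u2 < c + n -> c <= w2 < c + n ->
  c <= n -> ~~ cross_nat (u1, w1) (u2, w2) ->
  ~~ cross [set ord_mod u1; ord_mod w1] [set ord_mod u2; ord_mod w2].
Proof.
move=> h1 h2 h3 h4 hc hl; rewrite /cross negb_or (cross1_ord_mod h1 h2 h3 h4 hc hl).
by apply: (cross1_ord_mod h3 h4 h1 h2 hc); rewrite cross_nat_sym.
Qed.

End OrdMod.

Lemma direction_bd n u : 1 < n -> direction (bd n u) = (2 * u + 1) %% n.
Proof.
move=> hn1; have hn : 0 < n by lia.
rewrite (bd_ord_mod hn) direction_set2; first by congr (_ %% _); lia.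
by rewrite -[u.+1]addn1 -{1}[u]addn0 eqn_modDl mod0n modn_small.
Qed.

(* A zigzag walk grows an interval [L, R] of integers one endpoint at a time;
   its state (L, R, b) records the interval and whether the walk stands at R
   (b = true) or at L. *)
Definition zstate := (nat * nat * bool)%type.
Definition zcur (s : zstate) : nat := if s.2 then s.1.2 else s.1.1.
Definition znext (s : zstate) (mv : bool) : nat := if mv then s.1.2.+1 else s.1.1.-1.
Definition zstep (s : zstate) (mv : bool) : zstate :=
  if mv then (s.1.1, s.1.2.+1, true) else (s.1.1.-1, s.1.2, false).

Fixpoint zverts (s : zstate) (ms : seq bool) : seq nat :=
  if ms is mv :: ms' then znext s mv :: zverts (zstep s mv) ms' else [::].
Fixpoint zfinal (s : zstate) (ms : seq bool) : zstate :=
  if ms is mv :: ms' then zfinal (zstep s mv) ms' else s.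
Fixpoint zedges (s : zstate) (ms : seq bool) : seq (nat * nat) :=
  if ms is mv :: ms' then (zcur s, znext s mv) :: zedges (zstep s mv) ms' else [::].
(* No left move from L = 0, where L.-1 would truncate. *)
Fixpoint zvalid (s : zstate) (ms : seq bool) : bool :=
  if ms is mv :: ms' then (mv || (0 < s.1.1)) && zvalid (zstep s mv) ms' else true.

Arguments zcur : simpl never.
Arguments znext : simpl never.
Arguments zstep : simpl never.

Lemma zcur_step s mv : zcur (zstep s mv) = znext s mv.
Proof. by case: mv; rewrite /zcur /znext /zstep. Qed.

Lemma zstep_cases s mv : mv || (0 < s.1.1) ->
  [/\ (zstep s mv).1.1 = s.1.1, (zstep s mv).1.2 = s.1.2.+1 & znext s mv = s.1.2.+1] \/
  [/\ (zstep s mv).1.1 = s.1.1.-1, (zstep s mv).1.2 = s.1.2,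
      znext s mv = s.1.1.-1 & 0 < s.1.1].
Proof. by rewrite /zstep /znext; case: mv => /= h; [left|right]. Qed.

Lemma size_zverts s ms : size (zverts s ms) = size ms.
Proof. by elim: ms s => //= mv ms IH s; rewrite IH. Qed.

Lemma zfinal_cat s ms1 ms2 : zfinal s (ms1 ++ ms2) = zfinal (zfinal s ms1) ms2.
Proof. by elim: ms1 s => //= mv ms IH s; rewrite IH. Qed.

Lemma zvalid_cat s ms1 ms2 :
  zvalid s (ms1 ++ ms2) = zvalid s ms1 && zvalid (zfinal s ms1) ms2.
Proof. by elim: ms1 s => //= mv ms IH s; rewrite IH andbA. Qed.

Lemma zedges_cat s ms1 ms2 :
  zedges s (ms1 ++ ms2) = zedges s ms1 ++ zedges (zfinal s ms1) ms2.
Proof. by elim: ms1 s => //= mv ms IH s; rewrite IH. Qed.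

Lemma zfinal_bounds s ms : zvalid s ms -> s.1.1 <= s.1.2 ->
  [/\ (zfinal s ms).1.1 <= s.1.1, s.1.2 <= (zfinal s ms).1.2 &
      (zfinal s ms).1.2 - (zfinal s ms).1.1 = s.1.2 - s.1.1 + size ms].
Proof.
elim: ms s => [|mv ms IH] s /=; first by rewrite addn0.
case/andP=> /zstep_cases hs hv hLR.
have hLR' : (zstep s mv).1.1 <= (zstep s mv).1.2 by case: hs => [[]|[]]; lia.
have [b1 b2 b3] := IH _ hv hLR'.
by case: hs => [[]|[]] => *; split; lia.
Qed.

Lemma zverts_window s ms : zvalid s ms -> s.1.1 <= s.1.2 ->
  uniq (zverts s ms) /\
  (forall v, v \in zverts s ms ->
     (zfinal s ms).1.1 <= v <= (zfinal s ms).1.2 /\ (v < s.1.1) || (s.1.2 < v)).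
Proof.
elim: ms s => [|mv ms IH] s //=.
case/andP=> /zstep_cases hs hv hLR.
have hLR' : (zstep s mv).1.1 <= (zstep s mv).1.2 by case: hs => [[]|[]]; lia.
have [b1 b2 _] := zfinal_bounds hv hLR'.
have [Hu Hw] := IH _ hv hLR'.
split.
  rewrite Hu andbT; apply/negP=> /Hw [_]; case: hs => [[]|[]]; lia.
move=> v; rewrite inE => /orP[/eqP->|/Hw [hv1 hv2]]; case: hs => [[]|[]]; lia.
Qed.

Lemma zedges_window s ms : zvalid s ms -> s.1.1 <= s.1.2 ->
  forall e, e \in zedges s ms ->
    (zfinal s ms).1.1 <= e.1 <= (zfinal s ms).1.2 /\
    (zfinal s ms).1.1 <= e.2 <= (zfinal s ms).1.2.
Proof.
elim: ms s => [|mv ms IH] s //=.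
case/andP=> /zstep_cases hs hv hLR.
have hLR' : (zstep s mv).1.1 <= (zstep s mv).1.2 by case: hs => [[]|[]]; lia.
have hcur : s.1.1 <= zcur s <= s.1.2 by rewrite /zcur; case: (s.2); lia.
have [b1 b2 _] := zfinal_bounds hv hLR'.
move=> e; rewrite inE => /orP[/eqP->|/(IH _ hv hLR') //] /=.
case: hs => [[]|[]]; lia.
Qed.

Lemma zedges_noncross s ms : zvalid s ms -> s.1.1 <= s.1.2 ->
  {in zedges s ms &, forall e f, ~~ cross_nat e f} /\
  (forall f, s.1.1 <= f.1 <= s.1.2 -> s.1.1 <= f.2 <= s.1.2 ->
     {in zedges s ms, forall e, ~~ cross_nat e f}).
Proof.
elim: ms s => [|mv ms IH] [[L R] b] //=.
case/andP=> /(@zstep_cases (L, R, b)) /= hs hv hLR.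
have hLR' : (zstep (L, R, b) mv).1.1 <= (zstep (L, R, b) mv).1.2.
  by case: hs => [[]|[]]; lia.
have [IH1 IH2] := IH _ hv hLR'.
have hcur : zcur (L, R, b) = L \/ zcur (L, R, b) = R.
  by rewrite /zcur; case: (b); [right|left].
have first_edge f : L <= f.1 <= R -> L <= f.2 <= R ->
    ~~ cross_nat (zcur (L, R, b), znext (L, R, b) mv) f &&
    ~~ cross_nat f (zcur (L, R, b), znext (L, R, b) mv).
  case: f => f1 f2 /= hf1 hf2; rewrite andbC; apply: cross_nat_extend hf1 hf2 hcur _.
  by case: hs => [[_ _ ->]|[_ _ -> ?]]; [right|left].
split.
  move=> e f; rewrite !inE => /orP[/eqP->|He] /orP[/eqP->|Hf].
  - exact: cross_nat_irr.
  - by rewrite cross_nat_sym; apply: IH2 => //=; case: hs => [[]|[]]; lia.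
  - by apply: IH2 => //=; case: hs => [[]|[]]; lia.
  - exact: IH1.
move=> f hf1 hf2 e; rewrite inE => /orP[/eqP->|He].
  by case/andP: (first_edge f hf1 hf2).
by apply: IH2 => //; case: hs => [[]|[]]; lia.
Qed.

Lemma zfinal_right L R w : zfinal (L, R, true) (nseq w true) = (L, R + w, true).
Proof.
elim: w R => [|w IH] R /=; first by rewrite addn0.
by rewrite /zstep /= IH addSnnS.
Qed.

Lemma zedges_right L R w :
  zedges (L, R, true) (nseq w true) = [seq (R + j, (R + j).+1) | j <- iota 0 w].
Proof.
elim: w R => [|w IH] R //=.
rewrite /zstep /zcur /znext /= IH addn0; congr (_ :: _).
rewrite -[1]addn0 iotaDl -map_comp; apply: eq_map => j /=; congr (_, _); lia.
Qed.

Lemma zvalid_right L R w : zvalid (L, R, true) (nseq w true).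
Proof. by elim: w R => //= w IH R; rewrite /zstep /=. Qed.

Lemma zfinal_left L R k : k <= L ->
  zfinal (L, R, false) (nseq k false) = (L - k, R, false).
Proof.
elim: k L => [|k IH] L /=; first by rewrite subn0.
by move=> hk; rewrite /zstep /= IH; [congr (_, _, _)|]; lia.
Qed.

Lemma zedges_left L R k : k <= L ->
  zedges (L, R, false) (nseq k false) = [seq (L - j, (L - j).-1) | j <- iota 0 k].
Proof.
elim: k L => [|k IH] L //= hk.
rewrite /zstep /zcur /znext /= IH; last by lia.
rewrite subn0; congr (_ :: _).
rewrite -[1]addn0 iotaDl -map_comp; apply: eq_map => j /=; congr (_, _); lia.
Qed.

Lemma zvalid_left L R k : k <= L -> zvalid (L, R, false) (nseq k false).
Proof.
elim: k L => [|k IH] L //= hk.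
by rewrite /zstep /=; apply/andP; split; [|apply: IH]; lia.
Qed.

Section ZigzagSHP.
Variable n : nat.
Hypothesis hn : 0 < n.
Local Notation lab := (ord_mod hn).

Lemma path_edges_zigzag s ms :
  path_edges (map lab (zcur s :: zverts s ms)) =
  map (fun e => [set lab e.1; lab e.2]) (zedges s ms).
Proof. by elim: ms s => [|mv ms IH] s //=; rewrite -IH zcur_step. Qed.

(* The bound on the final left end keeps the visited window inside [0, 2n),
   where reduction mod n is read off by a single subtraction. *)
Lemma zigzag_SHP v ms : zvalid (v, v, true) ms -> size ms = n.-1 ->
  (zfinal (v, v, true) ms).1.1 <= n ->
  is_SHP (map lab (v :: zverts (v, v, true) ms)).
Proof.
move=> hz hs hc.
have hvv : (v, v, true).1.1 <= (v, v, true).1.2 by [].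
have [b1 b2 b3] := zfinal_bounds hz hvv.
have [Hu Hv] := zverts_window hz hvv.
move: b1 b2 b3 hc Hv; set L := (zfinal _ _).1.1; set R := (zfinal _ _).1.2.
move=> /= b1 b2 b3 hc Hv.
have hR : R = L + n - 1 by rewrite hs in b3; lia.
have Hin x : x \in v :: zverts (v, v, true) ms -> L <= x < L + n.
  by rewrite inE => /orP[/eqP->|/Hv [+ _]]; lia.
apply/and3P; split.
- rewrite -[_ :: map _ _]/(map lab (v :: _)) map_inj_in_uniq.
    by rewrite /= Hu andbT; apply/negP=> /Hv [_] /=; lia.
  by move=> x y /Hin hx /Hin hy; exact: ord_mod_inj_window hx hy.
- by rewrite /= size_map size_zverts hs; apply/eqP; lia.
have -> : v = zcur (v, v, true) by [].
rewrite path_edges_zigzag.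
have He := zedges_window hz hvv; have [Hnc _] := zedges_noncross hz hvv.
apply/allP=> _ /mapP[[e1 e2] e_in ->]; apply/allP=> _ /mapP[[f1 f2] f_in ->].
have [he1 he2] := He _ e_in; have [hf1 hf2] := He _ f_in.
move: he1 he2 hf1 hf2; rewrite -/L -/R /= => he1 he2 hf1 hf2.
by apply: (@cross_ord_mod n hn L) => //=; [lia|lia|lia|lia|apply: Hnc].
Qed.

End ZigzagSHP.

Lemma npts_eq m : npts m = 2 * m - 1.
Proof. rewrite /npts; lia. Qed.

Lemma npts_gt0 m : 0 < m -> 0 < npts m.
Proof. rewrite /npts; lia. Qed.

Lemma odd_dir_mod m i : i < m ->
  (2 * i + 1) %% npts m = if 2 * i + 1 < npts m then 2 * i + 1 else 0.
Proof.
move=> hi; case: ifP => hh; first by rewrite modn_small.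
have -> : 2 * i + 1 = npts m by move: hh; rewrite npts_eq; lia.
by rewrite modnn.
Qed.

(* The boundary edges [y, y+1] with m <= y < 2m-1 have the even directions
   2, 4, ..., 2m-2, while the [i, i+1] with i < m have the odd ones and 0. *)
Lemma direction_bd_high m y i : 1 < m -> m <= y < npts m -> i < m ->
  direction (bd (npts m) y) != (2 * i + 1) %% npts m.
Proof.
move=> hm hy hi; have nn := npts_eq m.
rewrite direction_bd; last by lia.
rewrite (odd_dir_mod hi); have hy2 : 2 * y + 1 < (npts m).*2 by lia.
by case: (modn_lt_double hy2) => [[-> ?]|[-> ?]]; case: ltnP; lia.
Qed.

Lemma inner_sum_dir m alpha beta i z1 z2 : beta < m -> i < m ->
  (i < alpha) || (beta < i) -> alpha < z1 <= beta -> alpha < z2 <= beta ->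
  (z1 + z2) %% npts m != (2 * i + 1) %% npts m.
Proof.
move=> hb hi hout h1 h2; have nn := npts_eq m.
by rewrite (odd_dir_mod hi) modn_small; case: ltnP; lia.
Qed.

Lemma chord_dir m alpha beta i z y : beta < m -> i < m -> alpha <= i <= beta ->
  alpha < z <= beta -> beta.+2 <= y < alpha + npts m ->
  beta.*2 <= z + y <= alpha.*2 + npts m + 2 ->
  (z + y) %% npts m = (2 * i + 1) %% npts m -> i = alpha \/ i = beta.
Proof.
move=> hb hi hin hz hy hs; have nn := npts_eq m.
have hzy : z + y < (npts m).*2 by lia.
rewrite (odd_dir_mod hi).
by case: (modn_lt_double hzy) => [[-> ?]|[-> ?]]; case: ltnP; lia.
Qed.

(* lia is very slow on set-membership hypotheses, which arithmetic never needs. *)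
Ltac arith_lia :=
  repeat match goal with H : context [in_mem _ _] |- _ => clear H end; lia.

Section Main.
Variables (m : nat) (B : {set {set 'I_(npts m)}}).
Local Notation n := (npts m).
Variables alpha beta a b : nat.
Hypothesis hab : [/\ alpha < a, a < b, b < beta & beta < m].

Let hn : 0 < n.
Proof. by case: hab => *; apply: npts_gt0; arith_lia. Qed.
Local Notation lab := (ord_mod hn).

Hypothesis hedge : forall e, e \in B -> #|e| = 2.
Hypothesis hdir1 : forall i, i < m -> #|[set e in B | direction e == (2 * i + 1) %% n]| = 1.
Hypothesis hdir2 : forall e, e \in B -> exists2 i, i < m & direction e = (2 * i + 1) %% n.
Hypothesis hfirst : bd n alpha \in B.
Hypothesis hfirst_min : forall i, i < alpha -> bd n i \notin B.
Hypothesis hlast : bd n beta \in B.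
Hypothesis hlast_max : forall i, beta < i -> i < m -> bd n i \notin B.
Hypothesis ha : bd n a \notin B.
Hypothesis hb : bd n b \notin B.

Lemma dir_uniq E1 E2 i : E1 \in B -> E2 \in B -> i < m ->
  direction E1 = (2 * i + 1) %% n -> direction E2 = (2 * i + 1) %% n -> E1 = E2.
Proof.
move=> h1 h2 hi d1 d2.
have /cards1P[E hE] : #|[set e in B | direction e == (2 * i + 1) %% n]| == 1.
  by rewrite hdir1.
have : E1 \in [set e in B | direction e == (2 * i + 1) %% n] by rewrite inE h1 d1 eqxx.
have : E2 \in [set e in B | direction e == (2 * i + 1) %% n] by rewrite inE h2 d2 eqxx.
by rewrite hE !inE => /eqP-> /eqP->.
Qed.

Lemma bd_notin_B y : beta < y < alpha + n -> bd n y \notin B.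
Proof.
case: hab => h1 h2 h3 h4 /andP[hy1 hy2]; have nn := npts_eq m.
have [hym|hym] := ltnP y m; first exact: hlast_max.
have [hyn|hyn] := ltnP y n.
  apply/negP=> /hdir2 [i hi /eqP]; apply/negP; apply: direction_bd_high => //; arith_lia.
by rewrite -(subnK hyn) bd_addn; apply: hfirst_min; arith_lia.
Qed.

Definition outer (E : {set 'I_n}) : bool :=
  [exists i : 'I_m, ((i < alpha) || (beta < i)) && (direction E == (2 * i + 1) %% n)].

Lemma outer_inner_uniq E z1 z2 : E \in B -> outer E ->
  alpha < z1 <= beta -> alpha < z2 <= beta -> lab z1 \in E -> lab z2 \in E -> z1 = z2.
Proof.
move=> hE /existsP[i /andP[hi /eqP hd]] h1 h2 e1 e2.
case: hab => _ _ _ hbm; have nn := npts_eq m.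
apply/eqP/negPn/negP => hne.
have hl : lab z1 != lab z2 by apply: (ord_mod_window_neq hn (c := alpha)) => //; arith_lia.
move: hd; rewrite (card2_set2 (hedge hE) e1 e2 hl) (direction_set2 hn hl).
by move/eqP; apply/negP; apply: (inner_sum_dir hbm (ltn_ord i) hi h1 h2).
Qed.

Lemma ord_mod_notin_bd j y : j = alpha \/ j = beta -> beta.+2 <= y < alpha + n ->
  lab y \notin bd n j.
Proof.
move=> hj hy; case: hab => h1 h2 h3 h4; have nn := npts_eq m.
rewrite (bd_ord_mod hn) !inE; apply/norP.
by split; apply: (ord_mod_window_neq hn (c := alpha)); arith_lia.
Qed.

(* The only edges of B with directions between those of [beta, beta+1] and
   [alpha, alpha+1] are these two boundary edges, which miss the far arc. *)
Lemma chord_outer E z y : E \in B -> lab z \in E -> lab y \in E ->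
  alpha < z <= beta -> beta.+2 <= y < alpha + n ->
  beta.*2 <= z + y <= alpha.*2 + n + 2 -> outer E.
Proof.
move=> hE ez ey hz hy hs; case: hab => h1 h2 h3 h4; have nn := npts_eq m.
have hl : lab z != lab y by apply: (ord_mod_window_neq hn (c := alpha)); arith_lia.
have [i hi hd] := hdir2 hE.
have [hout|hin] := boolP ((i < alpha) || (beta < i)).
  by apply/existsP; exists (Ordinal hi); rewrite hout hd eqxx.
move: hin; rewrite negb_or -!leqNgt => /andP[hi1 hi2].
have hzy : (z + y) %% n = (2 * i + 1) %% n.
  by rewrite -hd (card2_set2 (hedge hE) ez ey hl) (direction_set2 hn hl).
have hij := chord_dir h4 hi (introT andP (conj hi1 hi2)) hz hy hs hzy.
have Ebd : E = bd n i.
  apply: (dir_uniq hE _ hi hd); last by rewrite direction_bd; arith_lia.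
  by case: hij => ->.
by case/negP: (ord_mod_notin_bd hij hy); rewrite -Ebd.
Qed.

Definition outer_at (z : nat) : {set {set 'I_n}} := [set E in B | outer E && (lab z \in E)].
Definition outer_from (y : nat) : {set {set 'I_n}} :=
  [set E in B | outer E && [exists z : 'I_n, (y <= z <= beta) && (z \in E)]].
Definition nouter (y : nat) : nat := #|outer_from y|.

Lemma nouter_step x y : alpha < y <= x -> x <= beta ->
  nouter x.+1 + #|outer_at x :|: outer_at y| <= nouter y.
Proof.
move=> hxy hx; case: hab => _ _ _ hbm; have nn := npts_eq m.
have disj : outer_from x.+1 :&: (outer_at x :|: outer_at y) = set0.
  apply/setP=> E; rewrite !inE; apply/negP.
  case/andP=> /and3P[hE ho /existsP[z /andP[hz hzE]]] hO.
  have hzE' : lab z \in E by rewrite (ord_mod_ord hn z).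
  have hz' : alpha < z <= beta by arith_lia.
  have in_x : alpha < x <= beta by arith_lia.
  have in_y : alpha < y <= beta by arith_lia.
  case/orP: hO => /and3P[_ _ hw].
  - by have := outer_inner_uniq hE ho hz' in_x hzE' hw; arith_lia.
  - by have := outer_inner_uniq hE ho hz' in_y hzE' hw; arith_lia.
rewrite /nouter -cardsUI disj cards0 addn0; apply: subset_leq_card.
apply/subsetP=> E; rewrite !inE.
case/orP=> [/and3P[-> -> /existsP[z /andP[hz hzE]]]|/orP[] /and3P[-> -> hE]] /=;
  apply/existsP.
- by exists z; rewrite hzE andbT; arith_lia.
- by exists (lab x); rewrite hE andbT /= modn_small; arith_lia.
- by exists (lab y); rewrite hE andbT /= modn_small; arith_lia.
Qed.

Lemma card_outer : #|[set E in B | outer E]| <= alpha + (m - 1 - beta).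
Proof.
case: hab => h1 h2 h3 h4.
set X := [set i : 'I_m | (i < alpha) || (beta < i)].
pose idx (E : {set 'I_n}) : 'I_m :=
  odflt (Ordinal h4) [pick i : 'I_m | (i \in X) && (direction E == (2 * i + 1) %% n)].
have idxP E : outer E -> (idx E \in X) && (direction E == (2 * idx E + 1) %% n).
  move=> /existsP hE; rewrite /idx; case: pickP => [i -> //|h0].
  by case: hE => i; move: (h0 i); rewrite inE => ->.
have le_X : #|[set E in B | outer E]| <= #|X|.
  rewrite -(card_in_imset (f := idx)).
    apply: subset_leq_card; apply/subsetP => i /imsetP[E].
    by rewrite inE => /andP[_ /idxP /andP[hX _]] ->.
  move=> E1 E2; rewrite !inE => /andP[hE1 /idxP /andP[_ /eqP d1]].
  case/andP=> hE2 /idxP /andP[_ /eqP d2] e12.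
  by apply: (dir_uniq hE1 hE2 (ltn_ord (idx E1)) d1); rewrite e12.
have inner (j : 'I_(beta - alpha).+1) : alpha + j < m by have := ltn_ord j; arith_lia.
pose emb (j : 'I_(beta - alpha).+1) : 'I_m := Ordinal (inner j).
have emb_inj : injective emb by move=> j1 j2 /(congr1 val) /= /addnI /val_inj.
have le_CX : (beta - alpha).+1 <= #|~: X|.
  rewrite -{1}(card_ord (beta - alpha).+1) -cardsT -(card_imset _ emb_inj).
  apply: subset_leq_card; apply/subsetP => _ /imsetP[j _ ->]; rewrite !inE /=.
  by have := ltn_ord j; arith_lia.
by move: (cardsC X); rewrite card_ord; lia.
Qed.

Lemma nouter_le y : nouter y <= alpha + (m - 1 - beta).
Proof.
apply: leq_trans card_outer; apply: subset_leq_card.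
by apply/subsetP=> E; rewrite !inE => /and3P[-> ->].
Qed.

(* Pigeonhole: each of the 2c + 1 candidate pairs of jumps that hits B is
   charged, injectively, to an outer edge at x or at y together with a side. *)
Lemma jump_pick x y R : alpha < y <= x -> x <= beta -> beta.+2 <= R ->
  beta.*2 <= y + R ->
  x + R + (#|outer_at x :|: outer_at y|).*2 + 1 <= alpha.*2 + n + 2 ->
  R + (#|outer_at x :|: outer_at y|).*2 + 1 < alpha + n ->
  exists2 w, w <= (#|outer_at x :|: outer_at y|).*2 &
    ([set lab (R + w); lab x] \notin B) && ([set lab y; lab (R + w).+1] \notin B).
Proof.
set c := #|outer_at x :|: outer_at y|.
move=> hxy hx hR hlo hhi hRc; case: hab => h1 h2 h3 h4; have nn := npts_eq m.
pose e1 (w : 'I_c.*2.+1) := [set lab (R + w); lab x].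
pose e2 (w : 'I_c.*2.+1) := [set lab y; lab (R + w).+1].
have e1_outer w : e1 w \in B -> e1 w \in outer_at x.
  move=> hB; have := ltn_ord w; rewrite /outer_at inE hB /e1 !inE eqxx orbT andbT => hw.
  by apply: (chord_outer hB (z := x) (y := R + w)); rewrite ?inE ?eqxx ?orbT //; arith_lia.
have e2_outer w : e2 w \in B -> e2 w \in outer_at y.
  move=> hB; have := ltn_ord w; rewrite /outer_at inE hB /e2 !inE eqxx andbT => hw.
  by apply: (chord_outer hB (z := y) (y := (R + w).+1)); rewrite ?inE ?eqxx ?orbT //; arith_lia.
suff [w hw] : exists w : 'I_c.*2.+1, (e1 w \notin B) && (e2 w \notin B).
  by exists w; rewrite // -ltnS.
apply/existsP; apply: contraT; rewrite negb_exists => /forallP bad.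
pose f (w : 'I_c.*2.+1) := if e1 w \in B then (e1 w, true) else (e2 w, false).
have far_neq (u v : nat) : alpha < u <= beta -> beta < v < alpha + n -> lab v != lab u.
  by move=> hu hv; apply: (ord_mod_window_neq hn (c := alpha)); arith_lia.
have f_inj : injective f.
  have lt_n (w : 'I_c.*2.+1) : w < n by have := ltn_ord w; arith_lia.
  move=> w1 w2; have := ltn_ord w1; have := ltn_ord w2; rewrite /f => hw2 hw1.
  case: ifP => _; case: ifP => _ // [E].
  - apply/ord_inj/(@ord_mod_addn_inj _ _ R _ _ (lt_n w1) (lt_n w2)).
    by apply: set2_cancelr E _; apply: far_neq; arith_lia.
  - apply/ord_inj/(@ord_mod_addn_inj _ _ R.+1 _ _ (lt_n w1) (lt_n w2)).
    apply: (@set2_cancelr _ (lab y)); last by rewrite addSn; apply: far_neq; arith_lia.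
    by rewrite !addSn setUC; move: E; rewrite /e2 => ->; rewrite setUC.
have f_sub : f @: setT \subset setX (outer_at x :|: outer_at y) setT.
  apply/subsetP => _ /imsetP[w _ ->]; rewrite /f.
  case: ifP => h1B; rewrite in_setX in_setT andbT in_setU /=; first by rewrite e1_outer.
  by have := bad w; rewrite negb_and !negbK h1B => /e2_outer ->; rewrite orbT.
have := subset_leq_card f_sub.
by rewrite (card_imset _ f_inj) cardsT card_ord cardsX cardsT card_bool -/c; arith_lia.
Qed.

Definition avoids (s : zstate) (ms : seq bool) : bool :=
  all (fun e => [set lab e.1; lab e.2] \notin B) (zedges s ms).

Lemma avoids_cat s ms1 ms2 :
  avoids s (ms1 ++ ms2) = avoids s ms1 && avoids (zfinal s ms1) ms2.
Proof. by rewrite /avoids zedges_cat all_cat. Qed.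

Definition detour (w k : nat) : seq bool :=
  nseq w true ++ false :: nseq k false ++ [:: true].

Lemma detour_final x R w k : k <= x ->
  zfinal (x.+1, R, true) (detour w k) = (x - k, (R + w).+1, true).
Proof. by move=> hk; rewrite zfinal_cat zfinal_right /= zfinal_cat zfinal_left. Qed.

Lemma detour_valid x R w k : k <= x -> zvalid (x.+1, R, true) (detour w k).
Proof.
move=> hk; rewrite zvalid_cat zvalid_right zfinal_right /= {1}/zstep /=.
by rewrite zvalid_cat zvalid_left // zfinal_left.
Qed.

Lemma detour_avoids x R w k : k < x ->
  (forall j, j < w -> bd n (R + j) \notin B) ->
  [set lab (R + w); lab x] \notin B ->
  (forall j, j < k -> bd n (x - j).-1 \notin B) ->
  [set lab (x - k); lab (R + w).+1] \notin B ->
  avoids (x.+1, R, true) (detour w k).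
Proof.
move=> hk right_run jump_left left_run jump_right.
have e : zstep (x.+1, R + w, true) false = (x, R + w, false) by [].
rewrite /detour /avoids zedges_cat zedges_right zfinal_right [zedges _ (false :: _)]/= e.
rewrite zedges_cat zedges_left ?zfinal_left /= /zcur /znext /=; try arith_lia.
rewrite all_cat /= all_cat /= jump_left jump_right /= !andbT.
apply/andP; split; apply/allP=> e' /mapP[j]; rewrite mem_iota add0n => hj ->.
  by rewrite -(bd_ord_mod hn); apply: right_run.
have hjx : 0 < x - j by arith_lia.
by rewrite /= setUC -[x - j](prednK hjx) -(bd_ord_mod hn); apply: left_run.
Qed.

(* The lower bound keeps the jump chords in the range of chord_outer; the upper
   bound, with nouter_le, keeps the right end below alpha + n.  A detour raises
   x + R + W by w, which jump_pick pays for with the outer edges it charges. *)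
Definition budget (x R W : nat) : Prop :=
  beta.*2.+2 <= x + R + W <= beta.*2.+2 + (nouter x.+1).*2.

Lemma detour_step x R W k : alpha < x - k -> W + k <= 2 -> alpha + 3 <= x + W ->
  x <= beta -> beta.+2 <= R -> budget x R W ->
  (forall j, j < k -> bd n (x - j).-1 \notin B) ->
  exists w, [/\ avoids (x.+1, R, true) (detour w k),
     zfinal (x.+1, R, true) (detour w k) = (x - k, (R + w).+1, true),
     x + R + w + W <= beta.*2.+2 + (nouter (x - k)).*2 & (R + w).+1 < alpha + n].
Proof.
move=> hk hWk slack hx hR /andP[hlo hhi] left_run.
case: hab => h1 h2 h3 h4; have nn := npts_eq m.
have hxk : alpha < x - k <= x by arith_lia.
have charge := nouter_step hxk hx.
have bound := nouter_le (x - k).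
set c := #|outer_at x :|: outer_at (x - k)| in charge.
have p1 : beta.*2 <= x - k + R by arith_lia.
have p2 : x + R + c.*2 + 1 <= alpha.*2 + n + 2 by arith_lia.
have p3 : R + c.*2 + 1 < alpha + n by arith_lia.
have [w hw /andP[jump_left jump_right]] := jump_pick hxk hx hR p1 p2 p3.
exists w; split; try arith_lia; last by apply: detour_final; arith_lia.
apply: detour_avoids => //; first arith_lia.
by move=> j hj; apply: bd_notin_B; arith_lia.
Qed.

(* W of the holes [a, a+1], [b, b+1] have been walked down; the others lie
   below x. *)
Definition hole_phase (W x : nat) : Prop :=
  (W = 0 /\ b < x) \/ (W = 1 /\ a < x < b) \/ (W = 2 /\ x < a).

Lemma holes_below x W : alpha < x <= beta -> hole_phase W x ->
  exists k, [/\ alpha < x - k, W + k <= 2,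
    forall j, j < k -> bd n (x - j).-1 \notin B &
    x - k = alpha.+1 \/ alpha.+1 < x - k /\ hole_phase (W + k) (x - k).-1].
Proof.
rewrite /hole_phase => hx hW; case: hab => h1 h2 h3 h4.
have [eb|nb] := eqVneq x.-1 b.
  have [ea|na] := eqVneq x.-2 a.
    exists 2; split; try arith_lia.
    by move=> [|[|j]] // _; [rewrite subn0 eb | rewrite subn1 ea].
  exists 1; split; try arith_lia.
  by move=> [|j] // _; rewrite subn0 eb.
have [ea|na] := eqVneq x.-1 a.
  exists 1; split; try arith_lia.
  by move=> [|j] // _; rewrite subn0 ea.
by exists 0; split; try arith_lia.
Qed.

Lemma sweep x R W : alpha < x <= beta -> beta.+2 <= R -> budget x R W ->
  hole_phase W x ->
  exists ms, [/\ avoids (x.+1, R, true) ms, zvalid (x.+1, R, true) ms &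
                 zfinal (x.+1, R, true) ms = (alpha.+1, alpha + n, true)].
Proof.
elim/ltn_ind: x R W => x IH R W hx hR hbud hW.
case: hab => h1 h2 h3 h4.
have slack : alpha + 3 <= x + W by move: hW; rewrite /hole_phase; arith_lia.
have [k [hk hWk left_run hnext]] := holes_below hx hW.
have [w [o1 o2 o3 o4]] := detour_step hk hWk slack (proj2 (andP hx)) hR hbud left_run.
have hdv : zvalid (x.+1, R, true) (detour w k) by apply: detour_valid; arith_lia.
case: hnext => [fk|[fk hW']].
  exists (detour w k ++ nseq (alpha + n - (R + w).+1) true).
  rewrite avoids_cat zvalid_cat zfinal_cat o1 o2 hdv zfinal_right zvalid_right fk.
  split=> //; last by congr (_, _, _); arith_lia.
  rewrite /avoids zedges_right; apply/allP=> e /mapP[j]; rewrite mem_iota add0n => hj ->.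
  by rewrite /= -(bd_ord_mod hn); apply: bd_notin_B; arith_lia.
have ex : (x - k).-1.+1 = x - k by arith_lia.
have lt_x : (x - k).-1 < x by arith_lia.
have hx' : alpha < (x - k).-1 <= beta by arith_lia.
have hR' : beta.+2 <= (R + w).+1 by arith_lia.
have hbud' : budget (x - k).-1 (R + w).+1 (W + k) by move: hbud; rewrite /budget ex; arith_lia.
have [ms' [m1 m2 m3]] := IH _ lt_x _ _ hx' hR' hbud' hW'.
exists (detour w k ++ ms').
by rewrite avoids_cat zvalid_cat zfinal_cat o1 o2 hdv -ex m1 m2 m3.
Qed.

Lemma avoids_path_edges s ms : avoids s ms ->
  ~~ has (fun e => e \in B) (path_edges (map lab (zcur s :: zverts s ms))).
Proof.
rewrite path_edges_zigzag has_map -all_predC => /allP hs.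
by apply/allP=> e /hs.
Qed.

Lemma not_meets_all_SHP : ~ meets_all_SHP B.
Proof.
move=> hmeet; case: hab => h1 h2 h3 h4; have nn := npts_eq m.
have hx : alpha < beta <= beta by arith_lia.
have hbud : budget beta beta.+2 0 by rewrite /budget; arith_lia.
have hph : hole_phase 0 beta by left.
have [ms [m1 m2 m3]] := sweep hx (leqnn _) hbud hph.
pose s0 : zstate := (beta.+1, beta.+1, true).
have z0 : zvalid s0 (true :: ms) by [].
have f0 : zfinal s0 (true :: ms) = (alpha.+1, alpha + n, true) by [].
have [_ _ hsize] := zfinal_bounds z0 (leqnn _).
rewrite f0 /= in hsize.
have hS : is_SHP (map lab (beta.+1 :: zverts s0 (true :: ms))).
  by apply: (zigzag_SHP hn z0); rewrite ?[zfinal _ _]f0 /=; arith_lia.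
have hav : avoids s0 (true :: ms).
  rewrite /avoids /= -/(avoids _ ms) m1 andbT -(bd_ord_mod hn).
  by apply: bd_notin_B; rewrite /zcur /=; arith_lia.
by move/negP: (avoids_path_edges hav); apply; apply: hmeet.
Qed.

End Main.

Theorem proposition3 (m : nat) (hm : 2 <= m)
  (B : {set {set 'I_(npts m)}})
  (hB : is_blocker B)
  (* one edge of B per direction of [i,i+1], 0 <= i < m ... *)
  (hdir1 : forall i, i < m ->
     #|[set e in B | direction e == (2 * i + 1) %% npts m]| = 1)
  (* ... and every edge of B is parallel (or equal) to one of them *)
  (hdir2 : forall e, e \in B ->
     exists2 i, i < m & direction e = (2 * i + 1) %% npts m)
  (alpha delta : nat) (halpha : alpha < m) (hdelta : delta < m)
  (hfirst : bd (npts m) alpha \in B)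
  (hfirst_min : forall i, i < alpha -> bd (npts m) i \notin B)
  (hlast : bd (npts m) (m - delta - 1) \in B)
  (hlast_max : forall i, m - delta - 1 < i -> i < m -> bd (npts m) i \notin B) :
  #|[set i : 'I_m | (alpha <= i) && (i < m - delta) && (bd (npts m) i \notin B)]| <= 1.
Proof.
rewrite leqNgt; apply/negP => /card_gt1P[i1 [i2 [hi1 hi2 hne]]].
case: hB => hedge hmeet _.
wlog lt12 : i1 i2 hi1 hi2 hne / i1 < i2.
  move=> H; case: (ltngtP i1 i2) => h; first exact: (H i1 i2).
    by apply: (H i2 i1) => //; rewrite eq_sym.
  by move: hne; rewrite -val_eqE /= h eqxx.
move: hi1 hi2; rewrite !inE => /andP[/andP[a1 a2] a3] /andP[/andP[b1 b2] b3].
have hal : alpha < i1 by rewrite ltn_neqAle a1 andbT; apply: contraNneq a3 => <-.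
have hbe : i2 < m - delta - 1.
  rewrite ltn_neqAle; apply/andP; split; last by lia.
  by apply: contraNneq b3 => ->.
have hab : [/\ alpha < i1, i1 < i2, i2 < m - delta - 1 & m - delta - 1 < m].
  by split=> //; lia.
have hedge2 e : e \in B -> #|e| = 2 by move/hedge/eqP.
exact: (not_meets_all_SHP hab hedge2 hdir1 hdir2 hfirst hfirst_min hlast hlast_max a3 b3).
Qed.
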